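(* Let $P$ be a definite logic program, let $p(t_1,\ldots,t_n)$ be an atom, let $X_1,\ldots,X_n$ be distinct fresh variables, and let $\mathcal{C}_0=\langle p(t_1,\ldots,t_n)_{id} \;]\![\; p(X_1,\ldots,X_n)_{id}\rangle$ be the corresponding initial concolic state. Let $\mathcal{C}_0\leadsto\mathcal{C}_1\leadsto\cdots\leadsto\mathcal{C}_m$, $m\geq 0$, be a finite (possibly incomplete) concolic execution for $\mathcal{C}_0$ in $P$. Then for every $i\in\{0,\ldots,m\}$ such that $\mathcal{C}_i$ has the form $\langle \mathcal{B}^{c}_{\delta}\mid S \;]\![\; \mathcal{D}^{c'}_{\theta}\mid S'\rangle$ (the clause labels $c,c'$ possibly absent), the following hold: $|S|=|S'|$; $\mathcal{D}\leqslant\mathcal{B}$; $c=c'$ (when these labels are present); and $p(X_1,\ldots,X_n)\theta\leqslant p(t_1,\ldots,t_n)\delta$.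
   Context: Programs are definite logic programs; every clause $c$ has a unique label $\ell(c)$. Goals are conjunctions of atoms (including the special atoms $\mathsf{true}$ and $\mathsf{fail}$). For syntactic objects $s_1,s_2$, $s_1\leqslant s_2$ (''$s_1$ is more general than $s_2$'') means $s_1\theta=s_2$ for some substitution $\theta$. For an atom $A$, $\mathsf{clauses}(A,P)$ is the sequence (in program order) of renamed-apart clauses of $P$ whose heads unify with $A$. A concolic state has the form $\langle S\;]\![\; S'\rangle$ where $S$ (concrete part) and $S'$ (symbolic part) are sequences, separated by $\mid$, of goals each labeled with a substitution and possibly additionally with a program clause, written $\mathcal{B}_\delta$ or $\mathcal{B}^{c}_\delta$; $id$ is the identity substitution; $\textsc{success}_\delta$ and $\textsc{fail}_\delta$ denote final goals; $\epsilon$ is the empty sequence. The concolic transition relation $\leadsto$ is given by the rules: (success) $\langle \mathsf{true}_\delta\mid S\;]\![\;\mathsf{true}_\theta\mid S'\rangle\leadsto\langle\textsc{success}_\delta\;]\![\;\textsc{success}_\theta\rangle$. (failure) $\langle(\mathsf{fail},\mathcal{B})_\delta\;]\![\;(\mathsf{fail},\mathcal{B}')_\theta\rangle\leadsto\langle\textsc{fail}_\delta\;]\![\;\textsc{fail}_\theta\rangle$. (backtrack) if $S\neq\epsilon$: $\langle(\mathsf{fail},\mathcal{B})_\delta\mid S\;]\![\;(\mathsf{fail},\mathcal{B}')_\theta\mid S'\rangle\leadsto\langle S\;]\![\;S'\rangle$. (choice) if $\mathsf{clauses}(A,P)=c_1,\ldots,c_n$ with $n>0$: $\langle (A,\mathcal{B})_\delta\mid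 S\;]\![\;(A',\mathcal{B}')_\theta\mid S'\rangle\leadsto\langle (A,\mathcal{B})^{c_1}_\delta\mid\cdots\mid(A,\mathcal{B})^{c_n}_\delta\mid S\;]\![\;(A',\mathcal{B}')^{c_1}_\theta\mid\cdots\mid(A',\mathcal{B}')^{c_n}_\theta\mid S'\rangle$ (the step is labeled $c(\ell(c_1..c_n),\ell(d_1..d_k))$ where $d_1..d_k=\mathsf{clauses}(A',P)$). (choice_fail) if $\mathsf{clauses}(A,P)$ is empty: $\langle(A,\mathcal{B})_\delta\mid S\;]\![\;(A',\mathcal{B}')_\theta\mid S'\rangle\leadsto\langle(\mathsf{fail},\mathcal{B})_\delta\mid S\;]\![\;(\mathsf{fail},\mathcal{B}')_\theta\mid S'\rangle$. (unfold) if $\sigma=\mathrm{mgu}(A,H_1)$ and $\sigma'=\mathrm{mgu}(A',H_1)$: $\langle(A,\mathcal{B})^{H_1\leftarrow\mathcal{B}_1}_\delta\mid S\;]\![\;(A',\mathcal{B}')^{H_1\leftarrow\mathcal{B}_1}_\theta\mid S'\rangle\leadsto\langle(\mathcal{B}_1\sigma,\mathcal{B}\sigma)_{\delta\sigma}\mid S\;]\![\;(\mathcal{B}_1\sigma',\mathcal{B}'\sigma')_{\theta\sigma'}\mid S'\rangle$. *)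

From Stdlib Require Import List Arith.
Import ListNotations.

Inductive term : Type :=
| Var : nat -> term
| Fn  : nat -> list term -> term.

Inductive atom : Type := Atom : nat -> list term -> atom.

(* The special atom true is the neutral element of conjunction: a goal is a
   list of goal atoms, the empty list being the goal [true]. *)
Inductive gatom : Type :=
| GFail : gatom
| GAt   : atom -> gatom.

Definition goal := list gatom.

Record clause := mkClause { head : atom ; body : goal }.

Definition program := list clause.

Definition subst := nat -> term.
Definition id_subst : subst := Var.

Fixpoint tapply (s : subst) (t : term) : term :=
  match t with
  | Var x => s x
  | Fn f ts => Fn f (map (tapply s) ts)
  end.

Definition aapply (s : subst) (a : atom) : atom :=
  match a with Atom p ts => Atom p (map (tapply s) ts) end.

Definition gaapply (s : subst) (g : gatom) : gatom :=
  match g with GFail => GFail | GAt a => GAt (aapply s a) end.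

Definition gapply (s : subst) (B : goal) : goal := map (gaapply s) B.

Definition compose (d s : subst) : subst := fun x => tapply s (d x).

Definition atom_le (a1 a2 : atom) : Prop := exists th, aapply th a1 = a2.
Definition goal_le (g1 g2 : goal) : Prop := exists th, gapply th g1 = g2.

Fixpoint occurs (x : nat) (t : term) : bool :=
  match t with
  | Var y => Nat.eqb x y
  | Fn _ ts => existsb (occurs x) ts
  end.

Definition occurs_atom (x : nat) (a : atom) : bool :=
  match a with Atom _ ts => existsb (occurs x) ts end.

Definition occurs_gatom (x : nat) (g : gatom) : bool :=
  match g with GFail => false | GAt a => occurs_atom x a end.

Definition occurs_goal (x : nat) (B : goal) : bool := existsb (occurs_gatom x) B.

Definition occurs_clause (x : nat) (c : clause) : bool :=
  occurs_atom x (head c) || occurs_goal x (body c).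

Definition occurs_subst (x : nat) (s : subst) : Prop :=
  s x <> Var x \/ exists y, s y <> Var y /\ occurs x (s y) = true.

(** * Most general unifiers (idempotent and relevant, as computed by the
    standard unification algorithm) *)
Definition unifier (s : subst) (a1 a2 : atom) : Prop := aapply s a1 = aapply s a2.
Definition unifiable (a1 a2 : atom) : Prop := exists s, unifier s a1 a2.

Definition is_mgu (s : subst) (a1 a2 : atom) : Prop :=
  unifier s a1 a2 /\
  (forall t, unifier t a1 a2 -> exists e, forall x, t x = tapply e (s x)) /\
  (forall x, tapply s (s x) = s x) /\
  (forall x, occurs_subst x s -> occurs_atom x a1 = true \/ occurs_atom x a2 = true).

Definition renaming (r : nat -> nat) : Prop :=
  exists r', (forall x, r' (r x) = x) /\ (forall x, r (r' x) = x).

Definition rename_clause (r : nat -> nat) (c : clause) : clause :=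
  mkClause (aapply (fun x => Var (r x)) (head c))
           (gapply (fun x => Var (r x)) (body c)).

Definition variant (c c' : clause) : Prop :=
  exists r, renaming r /\ c' = rename_clause r c.

Definition fresh (used : nat -> Prop) (c' : clause) : Prop :=
  forall x, occurs_clause x c' = true -> ~ used x.

(* [clauses_rel used A P cs] : cs is clauses(A,P), i.e. the sequence, in
   program order, of the clauses of P whose heads unify with A, each renamed
   apart from the [used] variables (the variables of the execution so far,
   which include those of A) and from each other. *)
Inductive clauses_rel (used : nat -> Prop) (A : atom) : program -> list clause -> Prop :=
| cl_nil : clauses_rel used A [] []
| cl_keep : forall c P c' cs,
    variant c c' -> fresh used c' ->
    (forall x, occurs_clause x c' = true -> existsb (occurs_clause x) cs = false) ->
    unifiable A (head c') ->
    clauses_rel used A P cs ->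
    clauses_rel used A (c :: P) (c' :: cs)
| cl_skip : forall c P cs,
    (forall c', variant c c' -> fresh used c' -> ~ unifiable A (head c')) ->
    clauses_rel used A P cs ->
    clauses_rel used A (c :: P) cs.

(* A labeled goal B^c_delta (c optional), or a final goal SUCCESS_delta / FAIL_delta *)
Inductive elem : Type :=
| EGoal : goal -> option clause -> subst -> elem
| ESucc : subst -> elem
| EFail : subst -> elem.

(* < S ]|[ S' > : (concrete part, symbolic part) *)
Definition state := (list elem * list elem)%type.

Definition occurs_elem (x : nat) (e : elem) : Prop :=
  match e with
  | EGoal B oc d =>
      occurs_goal x B = true \/
      (exists c, oc = Some c /\ occurs_clause x c = true) \/ occurs_subst x d
  | ESucc d => occurs_subst x d
  | EFail d => occurs_subst x d
  end.

Definition occurs_state (x : nat) (C : state) : Prop :=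
  (exists e, In e (fst C) /\ occurs_elem x e) \/
  (exists e, In e (snd C) /\ occurs_elem x e).

(** * Concolic transition relation; [used] = variables of the execution so
    far (used for renaming apart). *)
Inductive cstep (P : program) (used : nat -> Prop) : state -> state -> Prop :=
| cs_success : forall d S th S',
    cstep P used (EGoal [] None d :: S, EGoal [] None th :: S')
                 ([ESucc d], [ESucc th])
| cs_failure : forall B d B' th,
    cstep P used ([EGoal (GFail :: B) None d], [EGoal (GFail :: B') None th])
                 ([EFail d], [EFail th])
| cs_backtrack : forall B d S B' th S',
    S <> [] ->
    cstep P used (EGoal (GFail :: B) None d :: S, EGoal (GFail :: B') None th :: S')
                 (S, S')
| cs_choice : forall A B d S A' B' th S' cs,
    clauses_rel used A P cs -> cs <> [] ->
    cstep P used (EGoal (GAt A :: B) None d :: S, EGoal (A' :: B') None th :: S')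
                 (map (fun c => EGoal (GAt A :: B) (Some c) d) cs ++ S,
                  map (fun c => EGoal (A' :: B') (Some c) th) cs ++ S')
| cs_choice_fail : forall A B d S A' B' th S',
    clauses_rel used A P [] ->
    cstep P used (EGoal (GAt A :: B) None d :: S, EGoal (A' :: B') None th :: S')
                 (EGoal (GFail :: B) None d :: S, EGoal (GFail :: B') None th :: S')
| cs_unfold : forall A B d S A' B' th S' c sg sg',
    is_mgu sg A (head c) -> is_mgu sg' A' (head c) ->
    cstep P used (EGoal (GAt A :: B) (Some c) d :: S,
                  EGoal (GAt A' :: B') (Some c) th :: S')
                 (EGoal (gapply sg (body c ++ B)) None (compose d sg) :: S,
                  EGoal (gapply sg' (body c ++ B')) None (compose th sg') :: S').

Definition init_state (p : nat) (ts : list term) (xs : list nat) : state :=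
  ([EGoal [GAt (Atom p ts)] None id_subst],
   [EGoal [GAt (Atom p (map Var xs))] None id_subst]).

Definition concolic_exec (P : program) (Cs : nat -> state) (m : nat) : Prop :=
  forall i, i < m ->
    cstep P (fun x => exists j, j <= i /\ occurs_state x (Cs j)) (Cs i) (Cs (S i)).

(* Concrete and symbolic parts advance in lockstep, so it suffices to show that
   the following relation between corresponding goals is preserved by every
   step: both carry the same clause label, and one substitution eta maps the
   symbolic goal D onto the concrete goal B and, simultaneously, the
   instantiated symbolic atom p(X)θ onto the concrete atom p(t)δ.  Choice
   steps keep eta.  For an unfolding step with mgus σ (concrete) and σ'
   (symbolic), let μ be eta with the variables of the renamed-apart clause c
   left fixed: μ maps A' to A and fixes head(c), so μσ unifies A' with head(c)
   and factors as σ'e; this e witnesses the relation for the new goals. *)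
From Pilot Require Import Defs.
From Stdlib Require Import List Arith Bool Lia.
Import ListNotations.

Fixpoint term_nested_ind (Pr : term -> Prop) (Hvar : forall x, Pr (Var x))
  (Hfn : forall f ts, Forall Pr ts -> Pr (Fn f ts)) (t : term) : Pr t :=
  match t with
  | Var x => Hvar x
  | Fn f ts =>
      Hfn f ts ((fix go (l : list term) : Forall Pr l :=
                   match l with
                   | [] => Forall_nil _
                   | u :: l' => Forall_cons _ (term_nested_ind Pr Hvar Hfn u) (go l')
                   end) ts)
  end.

Lemma tapply_ext (t : term) (s1 s2 : subst) :
  (forall x, occurs x t = true -> s1 x = s2 x) -> tapply s1 t = tapply s2 t.
Proof.
  revert s1 s2.
  induction t as [x|f ts IH] using term_nested_ind; intros s1 s2 Hagree; simpl.
  - apply Hagree; simpl; apply Nat.eqb_refl.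
  - f_equal; apply map_ext_in; intros u Hu.
    rewrite Forall_forall in IH; apply IH; auto.
    intros x Hx; apply Hagree; simpl; apply existsb_exists; eauto.
Qed.

Lemma tapply_compose (t : term) (d s : subst) :
  tapply s (tapply d t) = tapply (compose d s) t.
Proof.
  induction t as [x|f ts IH] using term_nested_ind; simpl; auto.
  rewrite map_map; f_equal; apply map_ext_in; intros u Hu.
  rewrite Forall_forall in IH; auto.
Qed.

Lemma tapply_id (t : term) : tapply id_subst t = t.
Proof.
  induction t as [x|f ts IH] using term_nested_ind; simpl; auto.
  f_equal; rewrite <- (map_id ts) at 2; apply map_ext_in; intros u Hu.
  rewrite Forall_forall in IH; auto.
Qed.

Lemma occurs_tapply (t : term) (s : subst) (x : nat) :
  occurs x (tapply s t) = true -> exists y, occurs y t = true /\ occurs x (s y) = true.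
Proof.
  induction t as [z|f ts IH] using term_nested_ind; simpl; intros Hx.
  - exists z; rewrite Nat.eqb_refl; auto.
  - apply existsb_exists in Hx as [u [Hu Hxu]].
    apply in_map_iff in Hu as [v [<- Hv]].
    rewrite Forall_forall in IH; destruct (IH v Hv Hxu) as [y [Hyv Hxy]].
    exists y; split; auto; apply existsb_exists; eauto.
Qed.

Lemma aapply_ext (a : atom) (s1 s2 : subst) :
  (forall x, occurs_atom x a = true -> s1 x = s2 x) -> aapply s1 a = aapply s2 a.
Proof.
  destruct a as [p ts]; intros Hagree; simpl; f_equal.
  apply map_ext_in; intros u Hu; apply tapply_ext.
  intros x Hx; apply Hagree; simpl; apply existsb_exists; eauto.
Qed.

Lemma aapply_compose (a : atom) (d s : subst) :
  aapply s (aapply d a) = aapply (compose d s) a.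
Proof.
  destruct a as [p ts]; simpl; rewrite map_map; f_equal.
  apply map_ext; intros; apply tapply_compose.
Qed.

Lemma aapply_id_on (a : atom) (s : subst) :
  (forall x, occurs_atom x a = true -> s x = Var x) -> aapply s a = a.
Proof.
  intros Hid; transitivity (aapply id_subst a); [now apply aapply_ext|].
  destruct a as [p ts]; simpl; f_equal.
  rewrite <- (map_id ts) at 2; apply map_ext; apply tapply_id.
Qed.

Lemma occurs_aapply (a : atom) (s : subst) (x : nat) :
  occurs_atom x (aapply s a) = true -> occurs_atom x a = true \/ occurs_subst x s.
Proof.
  destruct a as [p ts]; simpl; intros Hx.
  apply existsb_exists in Hx as [u [Hu Hxu]].
  apply in_map_iff in Hu as [v [<- Hv]].
  destruct (occurs_tapply v s x Hxu) as [y [Hyv Hxy]].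
  destruct (s y) as [z|f l] eqn:Esy.
  - simpl in Hxy; apply Nat.eqb_eq in Hxy as <-.
    destruct (Nat.eq_dec x y) as [->|Hne].
    + left; apply existsb_exists; eauto.
    + right; right; exists y; rewrite Esy; split; [congruence | apply Nat.eqb_refl].
  - right; right; exists y; rewrite Esy; split; [discriminate | exact Hxy].
Qed.

Lemma gapply_ext (g : goal) (s1 s2 : subst) :
  (forall x, occurs_goal x g = true -> s1 x = s2 x) -> gapply s1 g = gapply s2 g.
Proof.
  induction g as [|[|a] g IH]; intros Hagree; simpl; auto; f_equal.
  - apply IH; intros x Hx; apply Hagree; exact Hx.
  - f_equal; apply aapply_ext; intros x Hx; apply Hagree; simpl; rewrite Hx; auto.
  - apply IH; intros x Hx; apply Hagree; simpl; rewrite Hx, orb_true_r; auto.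
Qed.

Lemma gapply_compose (g : goal) (d s : subst) :
  gapply s (gapply d g) = gapply (compose d s) g.
Proof.
  induction g as [|[|a] g IH]; simpl; rewrite ?IH, ?aapply_compose; auto.
Qed.

Lemma gapply_id_on (g : goal) (s : subst) :
  (forall x, occurs_goal x g = true -> s x = Var x) -> gapply s g = g.
Proof.
  induction g as [|[|a] g IH]; intros Hid; simpl; auto; f_equal.
  - apply IH; exact Hid.
  - f_equal; apply aapply_id_on; intros x Hx; apply Hid; simpl; rewrite Hx; auto.
  - apply IH; intros x Hx; apply Hid; simpl; rewrite Hx, orb_true_r; auto.
Qed.

Lemma clauses_rel_fresh (used : nat -> Prop) (A : atom) (P : program) (cs : list clause) :
  clauses_rel used A P cs -> forall c, In c cs -> fresh used c.
Proof.
  induction 1; simpl; intros c0 Hin; [contradiction | destruct Hin as [<-|]; auto | auto].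
Qed.

Definition clause_apart (oc : option clause) (D : goal) (a : atom) : Prop :=
  forall c, oc = Some c -> forall x, occurs_clause x c = true ->
    occurs_goal x D = false /\ occurs_atom x a = false.

Definition instance_pair (pX pt : atom) (e e' : elem) : Prop :=
  match e with
  | EGoal B oc d => exists D th, e' = EGoal D oc th /\
      (exists eta, gapply eta D = B /\ aapply eta (aapply th pX) = aapply d pt) /\
      clause_apart oc D (aapply th pX)
  | _ => True
  end.

Lemma fresh_clause_apart (used : nat -> Prop) (c : clause) (D : goal) (a : atom) :
  fresh used c ->
  (forall x, occurs_goal x D = true \/ occurs_atom x a = true -> used x) ->
  clause_apart (Some c) D a.
Proof.
  intros Hfresh Hused c0 [= <-] x Hx.
  destruct (occurs_goal x D) eqn:ED, (occurs_atom x a) eqn:Ea; auto;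
    exfalso; apply (Hfresh x Hx), Hused; auto.
Qed.

Lemma choice_instance_pairs (pX pt : atom) (used : nat -> Prop)
    (B : goal) (d : subst) (D : goal) (th : subst) (cs : list clause) :
  (exists eta, gapply eta D = B /\ aapply eta (aapply th pX) = aapply d pt) ->
  (forall x, occurs_goal x D = true \/ occurs_atom x (aapply th pX) = true -> used x) ->
  (forall c, In c cs -> fresh used c) ->
  Forall2 (instance_pair pX pt)
    (map (fun c => EGoal B (Some c) d) cs) (map (fun c => EGoal D (Some c) th) cs).
Proof.
  intros Hinst Hused Hfresh; induction cs as [|c cs IH]; simpl; constructor.
  - exists D, th; split; [reflexivity | split; [exact Hinst |]].
    apply (fresh_clause_apart used); auto; apply Hfresh; simpl; auto.
  - apply IH; intros c0 Hc0; apply Hfresh; simpl; auto.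
Qed.

Section Unfold.

Variables (pX pt A A' : atom) (B B' : goal) (d th eta sg sg' : subst) (c : clause).
Hypothesis (Hsg : is_mgu sg A (Defs.head c)) (Hsg' : is_mgu sg' A' (Defs.head c)).
Hypothesis (HA : aapply eta A' = A) (HB : gapply eta B' = B).
Hypothesis (HpX : aapply eta (aapply th pX) = aapply d pt).
Hypothesis (Hapart : clause_apart (Some c) (GAt A' :: B') (aapply th pX)).

Let mu : subst := fun x => if occurs_clause x c then Var x else eta x.

Let mu_on_clause : forall x, occurs_clause x c = true -> mu x = Var x.
Proof. intros x Hx; unfold mu; rewrite Hx; auto. Qed.

Let mu_off_clause : forall x, occurs_clause x c = false -> mu x = eta x.
Proof. intros x Hx; unfold mu; rewrite Hx; auto. Qed.

Let mu_agrees (x : nat) :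
  occurs_goal x (GAt A' :: B') = true \/ occurs_atom x (aapply th pX) = true -> mu x = eta x.
Proof.
  intros Hocc; apply mu_off_clause.
  destruct (occurs_clause x c) eqn:Ec; auto.
  destruct (Hapart c eq_refl x Ec); intuition congruence.
Qed.

Let mu_goal : gapply mu (GAt A' :: B') = GAt A :: B.
Proof.
  rewrite <- HA, <- HB; apply (gapply_ext (GAt A' :: B')); intros x Hx; auto.
Qed.

Let mu_unifies : unifier (compose mu sg) A' (Defs.head c).
Proof.
  unfold unifier; rewrite <- !aapply_compose.
  injection mu_goal as ->; rewrite (aapply_id_on (Defs.head c) mu) by
    (intros x Hx; apply mu_on_clause; unfold occurs_clause; rewrite Hx; auto).
  apply Hsg.
Qed.

Lemma unfold_instance :
  exists e, gapply e (gapply sg' (body c ++ B')) = gapply sg (body c ++ B) /\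
            aapply e (aapply (compose th sg') pX) = aapply (compose d sg) pt.
Proof.
  destruct Hsg' as [_ [Hmost _]].
  destruct (Hmost _ mu_unifies) as [e He].
  assert (Hfactor : forall x, compose sg' e x = compose mu sg x) by (intros; now rewrite He).
  exists e; split.
  - rewrite gapply_compose, (gapply_ext _ _ (compose mu sg)) by auto.
    rewrite <- gapply_compose; unfold gapply at 2; rewrite map_app.
    fold (gapply mu (body c)) (gapply mu B').
    rewrite (gapply_id_on (body c) mu) by
      (intros x Hx; apply mu_on_clause; unfold occurs_clause; rewrite Hx, orb_true_r; auto).
    injection mu_goal as _ ->; reflexivity.
  - rewrite <- aapply_compose, aapply_compose, (aapply_ext _ _ (compose mu sg)) by auto.
    rewrite <- aapply_compose, (aapply_ext _ mu eta) by auto.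
    rewrite HpX, aapply_compose; reflexivity.
Qed.

End Unfold.

Lemma cstep_instance_pairs (P : program) (used : nat -> Prop) (pX pt : atom) (C C' : state) :
  (forall x, occurs_state x C \/ occurs_atom x pX = true -> used x) ->
  Forall2 (instance_pair pX pt) (fst C) (snd C) ->
  cstep P used C C' ->
  Forall2 (instance_pair pX pt) (fst C') (snd C').
Proof.
  intros Hused Hpairs Hstep; destruct Hstep; simpl in *;
    try (constructor; simpl; auto; fail);
    inversion Hpairs as [|e1 e2 l1 l2 Hpair Hrest]; subst; auto;
    destruct Hpair as [D [th0 [[= <- <-] [Hinst Hapart]]]].
  - apply Forall2_app; auto.
    apply (choice_instance_pairs pX pt used); auto.
    + intros x Hocc; apply Hused.
      destruct Hocc as [Hocc|Hocc]; [|apply occurs_aapply in Hocc as [|]].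
      * left; right; exists (EGoal (A' :: B') None th); simpl; auto.
      * auto.
      * left; right; exists (EGoal (A' :: B') None th); simpl; auto.
    + eapply clauses_rel_fresh; eauto.
  - constructor; auto; exists (GFail :: B'), th; split; auto; split.
    + destruct Hinst as [eta [[= _ HB] HpX]]; exists eta; simpl; rewrite HB; auto.
    + discriminate.
  - constructor; auto.
    destruct Hinst as [eta [[= HA HB] HpX]].
    exists (gapply sg' (body c ++ B')), (compose th sg');
      split; [reflexivity | split; [eapply unfold_instance; eauto | discriminate]].
Qed.

Fixpoint subst_of_pairs (xs : list nat) (ts : list term) : subst :=
  match xs, ts with
  | x0 :: xs', t0 :: ts' => fun x => if Nat.eqb x x0 then t0 else subst_of_pairs xs' ts' x
  | _, _ => Var
  end.

Lemma map_subst_of_pairs (xs : list nat) (ts : list term) :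
  NoDup xs -> length xs = length ts -> map (subst_of_pairs xs ts) xs = ts.
Proof.
  revert ts; induction xs as [|x0 xs IH]; intros [|t0 ts] Hnd Hlen;
    simpl in *; try discriminate; auto.
  inversion Hnd as [|? ? Hx0 Hnd']; subst.
  rewrite Nat.eqb_refl; f_equal.
  transitivity (map (subst_of_pairs xs ts) xs); [|apply IH; [exact Hnd' | now injection Hlen]].
  apply map_ext_in; intros x Hx.
  destruct (Nat.eqb_spec x x0) as [->|]; [contradiction | reflexivity].
Qed.

Lemma init_instance_pairs (p : nat) (ts : list term) (xs : list nat) :
  NoDup xs -> length xs = length ts ->
  Forall2 (instance_pair (Atom p (map Var xs)) (Atom p ts))
    (fst (init_state p ts xs)) (snd (init_state p ts xs)).
Proof.
  intros Hnd Hlen; simpl; constructor; auto.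
  exists [GAt (Atom p (map Var xs))], id_subst; split; [reflexivity | split; [|discriminate]].
  exists (subst_of_pairs xs ts).
  rewrite !(aapply_id_on _ id_subst) by auto; simpl.
  rewrite map_map; simpl; rewrite map_subst_of_pairs by auto; auto.
Qed.

Theorem theorem1 :
  forall (P : program) (p : nat) (ts : list term) (xs : list nat)
         (Cs : nat -> state) (m : nat),
    NoDup xs ->
    length xs = length ts ->
    (forall x, In x xs -> existsb (occurs x) ts = false) ->
    Cs 0 = init_state p ts xs ->
    concolic_exec P Cs m ->
    forall i, i <= m ->
    forall (B : goal) (c : option clause) (d : subst) (S : list elem)
           (D : goal) (c' : option clause) (th : subst) (S' : list elem),
      Cs i = (EGoal B c d :: S, EGoal D c' th :: S') ->
      length S = length S' /\
      goal_le D B /\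
      c = c' /\
      atom_le (aapply th (Atom p (map Var xs))) (aapply d (Atom p ts)).
Proof.
  intros P p ts xs Cs m Hnd Hlen _ Hinit Hexec.
  set (pX := Atom p (map Var xs)).
  assert (HpX : forall x, occurs_atom x pX = true -> occurs_state x (Cs 0)).
  { intros x Hx; rewrite Hinit; right.
    exists (EGoal [GAt pX] None id_subst); split; [simpl; auto|].
    left; simpl in Hx |- *; rewrite Hx; reflexivity. }
  assert (Hpairs : forall i, i <= m -> Forall2 (instance_pair pX (Atom p ts)) (fst (Cs i)) (snd (Cs i))).
  { induction i as [|i IH]; intros Hi.
    - rewrite Hinit; apply init_instance_pairs; auto.
    - apply (cstep_instance_pairs P (fun x => exists j, j <= i /\ occurs_state x (Cs j)) pX _ (Cs i));
        [| apply IH; lia | apply Hexec; lia].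
      intros x [Hx|Hx]; [exists i | exists 0]; split; auto; lia. }
  intros i Hi B c d S D c' th S' HCi.
  specialize (Hpairs i Hi); rewrite HCi in Hpairs.
  inversion Hpairs as [|? ? ? ? Hpair Hrest]; subst.
  destruct Hpair as [D0 [th0 [[= <- <- <-] [[eta [HD HX]] _]]]].
  repeat split; [eapply Forall2_length; eauto | exists eta; auto | exists eta; auto].
Qed.
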